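(* Let $(X,d)$ be a metric space, let $k\in[0,1)$, let $S,T:X\to X$ be mappings, and let $\phi:[0,+\infty)\to[0,+\infty)$ be a nonnegative Lebesgue-integrable function, summable on each compact subset of $[0,+\infty)$, such that $\int_0^{\epsilon}\phi(t)\,dt>0$ for each $\epsilon>0$. Suppose that for all $x,y\in X$, \[\int_0^{d(TSx,TSy)}\phi(t)\,dt\le k\int_0^{m'(Tx,Ty)}\phi(t)\,dt,\] where $m'(Tx,Ty)=\max\{d(Tx,Ty),d(Tx,TSx),d(Ty,TSy),\tfrac{d(Tx,TSy)+d(Ty,TSx)}{2}\}$. Fix $x\in X$ and put $x_n=TS^nx$ for $n\ge 0$. Then the sequence $\{x_n\}$ is bounded.
   Context: $S^n$ denotes the $n$-fold iterate of $S$ ($S^0$ the identity). *)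

From Stdlib Require Import Reals List.
Open Scope R_scope.

(* Lebesgue integral of a NONNEGATIVE function on a compact interval [a,b],
   realised as the Henstock-Kurzweil (gauge) integral: for nonnegative
   functions, HK-integrability coincides with Lebesgue integrability, with
   the same value. *)

(* A tagged division of [a,b] is a list of (tag, right endpoint) pairs.
   [fine delta a b l]: l is a tagged division of [a,b] that is delta-fine. *)
Fixpoint fine (delta : R -> R) (a b : R) (l : list (R * R)) : Prop :=
  match l with
  | nil => a = b
  | (t, c) :: l' =>
      a <= t /\ t <= c /\ t - delta t < a /\ c < t + delta t /\ fine delta c b l'
  end.

Fixpoint rsum (f : R -> R) (a : R) (l : list (R * R)) : R :=
  match l with
  | nil => 0
  | (t, c) :: l' => f t * (c - a) + rsum f c l'
  end.

Definition integral_on (f : R -> R) (a b I : R) : Prop :=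
  forall eps : R, 0 < eps ->
    exists delta : R -> R, (forall x, 0 < delta x) /\
      forall l, fine delta a b l -> Rabs (rsum f a l - I) < eps.

Definition mprime {X : Type} (d : X -> X -> R) (S T : X -> X) (x y : X) : R :=
  Rmax (Rmax (d (T x) (T y)) (d (T x) (T (S x))))
       (Rmax (d (T y) (T (S y))) ((d (T x) (T (S y)) + d (T y) (T (S x))) / 2)).

(* Write y_n = T S^n x and a_n = d(y_n, y_(n+1)), and let F(s) be the integral of
   phi over [0, s]; F is nondecreasing and positive on (0, +oo).  Comparing y_n
   with y_(n+1) shows that the gaps a_n decrease and F(a_(n+1)) <= k F(a_n), so
   a_n tends to 0.  Since k < 1 and F is positive on (0, +oo), F cannot
   satisfy F(u) <= k F(u + h) for every u >= 0 and h > 0, so some window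
   [u, u + h] has k F(u + h) < F(u).  Once the gaps are below h/4, the orbit can
   never leave the ball of radius u + h/2 around y_N: at the first exit, the
   contractive condition for the pair (y_N, y_(N+q+1)) would give
   F(u) <= k F(u + h). *)

From Stdlib Require Import Reals List Lra Lia Classical ClassicalEpsilon.
Open Scope R_scope.

Lemma fine_cat delta a b c l1 l2 :
  fine delta a b l1 -> fine delta b c l2 -> fine delta a c (l1 ++ l2).
Proof.
  revert a; induction l1 as [|[t e] l1 IH]; intros a H1 H2; simpl in *.
  - subst; auto.
  - destruct H1 as (?&?&?&?&?); repeat split; auto.
Qed.

Lemma rsum_cat f delta a b l1 l2 :
  fine delta a b l1 -> rsum f a (l1 ++ l2) = rsum f a l1 + rsum f b l2.
Proof.
  revert a; induction l1 as [|[t c] l1 IH]; intros a H1; simpl in *.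
  - subst; lra.
  - destruct H1 as (?&?&?&?&?). rewrite (IH c); auto. lra.
Qed.

Lemma rsum_ge0 f delta a b l :
  (forall t, 0 <= t -> 0 <= f t) -> 0 <= a -> fine delta a b l -> 0 <= rsum f a l.
Proof.
  intros Hf; revert a; induction l as [|[t c] l IH]; intros a Ha H1; simpl in *.
  - lra.
  - destruct H1 as (?&?&?&?&?).
    assert (0 <= f t) by (apply Hf; lra).
    assert (0 <= rsum f c l) by (apply IH; auto; lra).
    assert (0 <= f t * (c - a)) by (apply Rmult_le_pos; lra).
    lra.
Qed.

Lemma fine_le_gauge delta1 delta2 a b l :
  (forall x, delta1 x <= delta2 x) -> fine delta1 a b l -> fine delta2 a b l.
Proof.
  intros Hd; revert a; induction l as [|[t c] l IH]; intros a H1; simpl in *; auto.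
  destruct H1 as (?&?&?&?&?). specialize (Hd t). repeat split; auto; lra.
Qed.

(* Cousin's lemma: take the supremum s of the points reachable by a fine
   division; one more tag at s reaches s itself, and then beyond s unless s = b. *)
Lemma fine_exists delta a b :
  (forall x, 0 < delta x) -> a <= b -> exists l, fine delta a b l.
Proof.
  intros Hd Hab.
  set (E := fun x => a <= x <= b /\ exists l, fine delta a x l).
  assert (Ea : E a) by (split; [lra | exists nil; simpl; auto]).
  destruct (completeness E) as [s [Hs_ub Hs_lub]].
  { exists b; intros x [Hx _]; lra. }
  { exists a; exact Ea. }
  assert (Has : a <= s) by (apply Hs_ub, Ea).
  assert (Hsb : s <= b) by (apply Hs_lub; intros x [Hx _]; lra).
  assert (Hs : exists l, fine delta a s l).
  { destruct (classic (exists y, E y /\ s - delta s < y)) as [[y [[Hy [l Hl]] Hys]]|Hn].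
    - assert (y <= s) by (apply Hs_ub; split; [lra | exists l; auto]).
      exists (l ++ (s, s) :: nil). apply fine_cat with y; auto.
      simpl. specialize (Hd s). repeat split; lra.
    - exfalso. assert (s <= s - delta s).
      { apply Hs_lub. intros y Hy. apply Rnot_lt_le. intro. apply Hn. exists y; auto. }
      specialize (Hd s); lra. }
  destruct (Rle_lt_or_eq_dec s b Hsb) as [Hlt|<-]; auto.
  exfalso. destruct Hs as [l Hl].
  set (c := Rmin b (s + delta s / 2)).
  assert (Hc : s < c) by (unfold c; specialize (Hd s); apply Rmin_glb_lt; lra).
  assert (Hcb : c <= b) by apply Rmin_l.
  assert (Hcs : c <= s + delta s / 2) by apply Rmin_r.
  assert (c <= s).
  { apply Hs_ub. split; [lra|].
    exists (l ++ (s, c) :: nil). apply fine_cat with s; auto.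
    simpl. specialize (Hd s). repeat split; lra. }
  lra.
Qed.

Lemma integral_on_le_upper f a b I J :
  (forall t, 0 <= t -> 0 <= f t) -> 0 <= a -> a <= b ->
  integral_on f 0 a I -> integral_on f 0 b J -> I <= J.
Proof.
  intros Hf Ha Hab HI HJ. apply Rnot_lt_le; intro HJI.
  destruct (HI ((I - J) / 2) ltac:(lra)) as [d1 [Hd1 H1]].
  destruct (HJ ((I - J) / 2) ltac:(lra)) as [d2 [Hd2 H2]].
  set (dl := fun x => Rmin (d1 x) (d2 x)).
  assert (Hdl : forall x, 0 < dl x) by (intro x; apply Rmin_glb_lt; auto).
  destruct (fine_exists dl 0 a Hdl Ha) as [l1 Hl1].
  destruct (fine_exists dl a b Hdl Hab) as [l2 Hl2].
  specialize (H1 l1 (fine_le_gauge dl d1 0 a l1 (fun x => Rmin_l _ _) Hl1)).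
  specialize (H2 (l1 ++ l2)
    (fine_le_gauge dl d2 0 b _ (fun x => Rmin_r _ _) (fine_cat _ _ _ _ _ _ Hl1 Hl2))).
  rewrite (rsum_cat f dl 0 a l1 l2 Hl1) in H2.
  assert (0 <= rsum f a l2) by (apply rsum_ge0 with dl b; auto).
  apply Rabs_def2 in H1. apply Rabs_def2 in H2. lra.
Qed.

Lemma integral_on_choice f :
  (forall s, 0 <= s -> exists I, integral_on f 0 s I) ->
  exists F : R -> R, forall s, 0 <= s -> integral_on f 0 s (F s).
Proof.
  intros Hf. apply (choice (fun s I => 0 <= s -> integral_on f 0 s I)).
  intros s. destruct (Rle_or_lt 0 s) as [Hs|Hs].
  - destruct (Hf s Hs) as [I HI]. exists I; auto.
  - exists 0. intros; lra.
Qed.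

Lemma eventually_pow_mul_lt k A B :
  0 <= k < 1 -> 0 < A -> exists N, forall n, (N <= n)%nat -> k ^ n * B < A.
Proof.
  intros Hk HA. destruct (Rle_or_lt B 0) as [HB|HB].
  - exists 0%nat. intros n _.
    assert (0 <= k ^ n) by (apply pow_le; lra). nra.
  - destruct (pow_lt_1_zero k ltac:(rewrite Rabs_right; lra) (A / B)) as [N HN].
    { apply Rdiv_lt_0_compat; lra. }
    exists N. intros n Hn. specialize (HN n Hn).
    rewrite Rabs_right in HN by (apply Rle_ge, pow_le; lra).
    apply (Rmult_lt_compat_r B) in HN; [|lra].
    unfold Rdiv in HN. rewrite Rmult_assoc, Rinv_l in HN by lra. lra.
Qed.

Section PositiveFunction.

Variables (F : R -> R) (k : R).
Hypothesis hk : 0 <= k < 1.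
Hypothesis F_pos : forall a, 0 < a -> 0 < F a.

Lemma le_pow_mul_shift h s :
  (forall u, 0 <= u -> F u <= k * F (u + h)) -> 0 <= h -> 0 <= s ->
  forall n, F s <= k ^ n * F (s + INR n * h).
Proof.
  intros Hstep Hh Hs n; induction n as [|n IH].
  - simpl. replace (s + 0 * h) with s by ring. lra.
  - rewrite S_INR. simpl.
    assert (0 <= INR n) by apply pos_INR.
    pose proof (Hstep (s + INR n * h) ltac:(nra)) as Hn.
    replace (s + INR n * h + h) with (s + (INR n + 1) * h) in Hn by ring.
    assert (0 <= k ^ n) by (apply pow_le; lra).
    assert (k ^ n * F (s + INR n * h) <= k ^ n * (k * F (s + (INR n + 1) * h)))
      by (apply Rmult_le_compat_l; lra).
    lra.
Qed.

(* This replaces the continuity of F that a classical proof would use. *)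
Lemma contraction_window : exists u h, 0 <= u /\ 0 < h /\ k * F (u + h) < F u.
Proof.
  apply NNPP; intro Hn.
  assert (Hstep : forall h, 0 < h -> forall u, 0 <= u -> F u <= k * F (u + h)).
  { intros h Hh u Hu. apply Rnot_lt_le. intro. apply Hn. exists u, h; auto. }
  destruct (eventually_pow_mul_lt k (F 1) (F 2) hk (F_pos 1 ltac:(lra))) as [N0 HN0].
  set (N := Nat.max N0 1).
  assert (HN : 1 <= INR N)
    by (replace 1 with (INR 1) by reflexivity; apply le_INR; unfold N; lia).
  assert (Hh : 0 < / INR N) by (apply Rinv_0_lt_compat; lra).
  pose proof (le_pow_mul_shift (/ INR N) 1 (Hstep _ Hh) (Rlt_le _ _ Hh) Rle_0_1 N)
    as Hiter.
  rewrite Rinv_r in Hiter by lra.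
  specialize (HN0 N ltac:(unfold N; lia)).
  replace (1 + 1) with 2 in Hiter by ring.
  lra.
Qed.

End PositiveFunction.

Lemma exists_first_crossing (f : nat -> R) c p :
  f 0%nat < c -> c <= f p -> exists q, f q < c /\ c <= f (S q).
Proof.
  intros H0; induction p as [|p IH]; intros Hp; [lra|].
  destruct (Rle_or_lt c (f p)) as [Hle|Hlt]; eauto.
Qed.

Section Orbit.

Variables (X : Type) (d : X -> X -> R).
Hypothesis d_ge0 : forall x y, 0 <= d x y.
Hypothesis d_self : forall x, d x x = 0.
Hypothesis d_sym : forall x y, d x y = d y x.
Hypothesis d_tri : forall x y z, d x z <= d x y + d y z.

Variables (F : R -> R) (k : R).
Hypothesis hk : 0 <= k < 1.
Hypothesis F_mono : forall a b, 0 <= a -> a <= b -> F a <= F b.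
Hypothesis F_pos : forall a, 0 < a -> 0 < F a.

Variable y : nat -> X.

(* [mprime d S T u v] read along the sequence [y n = T (S^n x)]. *)
Definition mprime_seq n m : R :=
  Rmax (Rmax (d (y n) (y m)) (d (y n) (y (S n))))
       (Rmax (d (y m) (y (S m))) ((d (y n) (y (S m)) + d (y m) (y (S n))) / 2)).

Hypothesis F_contr : forall n m, F (d (y (S n)) (y (S m))) <= k * F (mprime_seq n m).

Let gap n := d (y n) (y (S n)).

Lemma mprime_seq_ge0 n m : 0 <= mprime_seq n m.
Proof.
  unfold mprime_seq. eapply Rle_trans; [|apply Rmax_l].
  eapply Rle_trans; [|apply Rmax_l]. apply d_ge0.
Qed.

Lemma mprime_seq_succ_le n : mprime_seq n (S n) <= Rmax (gap n) (gap (S n)).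
Proof.
  unfold mprime_seq. rewrite d_self.
  assert (d (y n) (y (S (S n))) <= gap n + gap (S n)) by apply d_tri.
  pose proof (Rmax_l (gap n) (gap (S n))). pose proof (Rmax_r (gap n) (gap (S n))).
  unfold gap in *. repeat apply Rmax_lub; lra.
Qed.

Lemma gap_succ_le n : gap (S n) <= gap n.
Proof.
  apply Rnot_lt_le; intro Hlt.
  assert (HM : F (mprime_seq n (S n)) <= F (gap (S n))).
  { apply F_mono; [apply mprime_seq_ge0|].
    rewrite <- (Rmax_right (gap n) (gap (S n))) by lra. apply mprime_seq_succ_le. }
  assert (0 <= gap n) by apply d_ge0.
  assert (0 < F (gap (S n))) by (apply F_pos; lra).
  pose proof (F_contr n (S n)).
  assert (k * F (mprime_seq n (S n)) <= k * F (gap (S n))) by (apply Rmult_le_compat_l; lra).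
  unfold gap in *. nra.
Qed.

Lemma F_gap_succ_le n : F (gap (S n)) <= k * F (gap n).
Proof.
  assert (HM : F (mprime_seq n (S n)) <= F (gap n)).
  { apply F_mono; [apply mprime_seq_ge0|].
    rewrite <- (Rmax_left (gap n) (gap (S n))) by apply gap_succ_le.
    apply mprime_seq_succ_le. }
  pose proof (F_contr n (S n)).
  assert (k * F (mprime_seq n (S n)) <= k * F (gap n)) by (apply Rmult_le_compat_l; lra).
  unfold gap in *. lra.
Qed.

Lemma F_gap_le_pow n : F (gap n) <= k ^ n * F (gap 0).
Proof.
  induction n as [|n IH]; simpl; [lra|].
  pose proof (F_gap_succ_le n).
  assert (k * F (gap n) <= k * (k ^ n * F (gap 0))) by (apply Rmult_le_compat_l; lra).
  lra.
Qed.

Lemma gap_le_of_le i j : (i <= j)%nat -> gap j <= gap i.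
Proof. induction 1; [lra|]. pose proof (gap_succ_le m). lra. Qed.

Lemma gap_eventually_le eta : 0 < eta -> exists N, forall n, (N <= n)%nat -> gap n <= eta.
Proof.
  intros He. destruct (classic (exists N, gap N <= eta)) as [[N HN]|Hn].
  - exists N; intros n Hn. pose proof (gap_le_of_le _ _ Hn). lra.
  - exfalso.
    assert (Hall : forall n, eta < gap n)
      by (intro n; apply Rnot_le_lt; intro; apply Hn; eauto).
    destruct (eventually_pow_mul_lt k (F eta) (F (gap 0)) hk (F_pos eta He)) as [N HN].
    specialize (HN N (le_n N)).
    assert (F eta <= F (gap N)) by (apply F_mono; [lra | apply Rlt_le, Hall]).
    pose proof (F_gap_le_pow N). lra.
Qed.

Lemma dist_shift_le j p : d (y j) (y (j + p)) <= INR p * gap 0.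
Proof.
  induction p as [|p IH].
  - rewrite Nat.add_0_r, d_self. simpl; lra.
  - rewrite S_INR, Nat.add_succ_r.
    pose proof (d_tri (y j) (y (j + p)) (y (S (j + p)))).
    pose proof (gap_le_of_le 0 (j + p) ltac:(lia)).
    unfold gap in *. lra.
Qed.

(* A first exit from the ball, at y_(N+q+1), would put d(y_(N+1), y_(N+q+2))
   above u and [mprime_seq N (N+q+1)] below u + h, against the choice of window. *)
Lemma dist_tail_lt u h N :
  0 <= u -> 0 < h -> k * F (u + h) < F u ->
  (forall n, (N <= n)%nat -> gap n <= h / 4) ->
  forall p, d (y N) (y (N + p)) < u + h / 2.
Proof.
  intros Hu Hh Hwin Hgap p. apply Rnot_le_lt; intro Hp.
  destruct (exists_first_crossing (fun q => d (y N) (y (N + q))) (u + h / 2) p)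
    as [q [Hq Hq1]]; simpl in *; auto.
  { rewrite Nat.add_0_r, d_self. lra. }
  rewrite Nat.add_succ_r in Hq1.
  set (m := (N + q)%nat) in *.
  assert (HaN : gap N <= h / 4) by (apply Hgap; lia).
  assert (Ham : gap m <= h / 4) by (apply Hgap; unfold m; lia).
  assert (Ham1 : gap (S m) <= h / 4) by (apply Hgap; unfold m; lia).
  set (D := d (y N) (y (S m))) in *.
  assert (D <= d (y N) (y m) + gap m) by apply d_tri.
  assert (HM : mprime_seq N (S m) <= u + h).
  { assert (d (y N) (y (S (S m))) <= D + gap (S m)) by apply d_tri.
    assert (d (y (S m)) (y (S N)) <= D + gap N).
    { pose proof (d_tri (y (S m)) (y N) (y (S N))). rewrite (d_sym (y (S m)) (y N)) in H1.
      unfold D, gap in *. lra. }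
    assert (0 <= gap N) by apply d_ge0. assert (0 <= gap (S m)) by apply d_ge0.
    unfold mprime_seq. fold D. unfold gap in *. repeat apply Rmax_lub; lra. }
  assert (HL : u <= d (y (S N)) (y (S (S m)))).
  { assert (D <= d (y N) (y (S N)) + d (y (S N)) (y (S m))) by apply d_tri.
    assert (d (y (S N)) (y (S m)) <= d (y (S N)) (y (S (S m))) + d (y (S (S m))) (y (S m)))
      by apply d_tri.
    rewrite (d_sym (y (S (S m)))) in *. unfold gap in *. lra. }
  assert (F u <= F (d (y (S N)) (y (S (S m))))) by (apply F_mono; lra).
  assert (F (mprime_seq N (S m)) <= F (u + h)) by (apply F_mono; [apply mprime_seq_ge0 | lra]).
  assert (k * F (mprime_seq N (S m)) <= k * F (u + h)) by (apply Rmult_le_compat_l; lra).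
  pose proof (F_contr N (S m)). lra.
Qed.

Lemma dist_le_of_tail_le N r :
  (forall p, d (y N) (y (N + p)) <= r) -> forall m, d (y N) (y m) <= r + INR N * gap 0.
Proof.
  intros Htail m.
  assert (0 <= gap 0) by apply d_ge0. pose proof (pos_INR N).
  destruct (Nat.le_gt_cases N m) as [Hm|Hm].
  - replace m with (N + (m - N))%nat by lia. specialize (Htail (m - N)%nat). nra.
  - rewrite d_sym. replace N with (m + (N - m))%nat at 1 by lia.
    pose proof (dist_shift_le m (N - m)).
    assert (INR (N - m) <= INR N) by (apply le_INR; lia).
    assert (0 <= r) by (specialize (Htail 0%nat); rewrite Nat.add_0_r, d_self in Htail; lra).
    nra.
Qed.

Theorem orbit_bounded : exists M, forall n m, d (y n) (y m) <= M.
Proof.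
  destruct (contraction_window F k hk F_pos) as [u [h [Hu [Hh Hwin]]]].
  destruct (gap_eventually_le (h / 4) ltac:(lra)) as [N HN].
  pose proof (dist_tail_lt u h N Hu Hh Hwin HN) as Htail.
  pose proof (dist_le_of_tail_le N (u + h / 2) (fun p => Rlt_le _ _ (Htail p))) as Hball.
  exists (2 * (u + h / 2 + INR N * gap 0)).
  intros n m. pose proof (d_tri (y n) (y N) (y m)).
  rewrite (d_sym (y n) (y N)) in H. pose proof (Hball n). pose proof (Hball m). lra.
Qed.

End Orbit.

Theorem mainTheorem3 (X : Type) (d : X -> X -> R)
  (d_nonneg : forall x y, 0 <= d x y)
  (d_eq0 : forall x y, d x y = 0 <-> x = y)
  (d_sym : forall x y, d x y = d y x)
  (d_tri : forall x y z, d x z <= d x y + d y z)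
  (k : R) (hk : 0 <= k < 1)
  (S T : X -> X)
  (phi : R -> R)
  (phi_nonneg : forall t, 0 <= t -> 0 <= phi t)
  (phi_loc_int : forall s, 0 <= s -> exists I, integral_on phi 0 s I)
  (phi_pos : forall eps, 0 < eps -> forall I, integral_on phi 0 eps I -> 0 < I)
  (contr : forall x y I1 I2,
      integral_on phi 0 (d (T (S x)) (T (S y))) I1 ->
      integral_on phi 0 (mprime d S T x y) I2 ->
      I1 <= k * I2)
  (x : X) :
  exists M : R, forall n m : nat,
    d (T (Nat.iter n S x)) (T (Nat.iter m S x)) <= M.
Proof.
  destruct (integral_on_choice phi phi_loc_int) as [F HF].
  set (y := fun n : nat => T (Nat.iter n S x)).
  apply (orbit_bounded X d d_nonneg (fun z => proj2 (d_eq0 z z) eq_refl) d_sym d_tri F k hk)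
    with (y := y).
  - intros a b Ha Hab. apply (integral_on_le_upper phi a b); auto. apply HF; lra.
  - intros a Ha. apply (phi_pos a Ha), HF; lra.
  - intros n m.
    exact (contr (Nat.iter n S x) (Nat.iter m S x) _ _
             (HF _ (d_nonneg _ _)) (HF _ (mprime_seq_ge0 X d d_nonneg y n m))).
Qed.
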